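(* Let $D$ be a tournament, $T\subseteq V(D)$ and $k\in\mathbb{N}$. Then $D$ has a $T$-feedback arc set of size at most $k$ if and only if there exists an order $\sigma$ of $V(D)$ with $\mathrm{cost}(\sigma)\le k$.
   Context: A tournament is a digraph with exactly one arc between every pair of distinct vertices. Given a terminal set $T\subseteq V(D)$, a $T$-cycle is a directed cycle containing at least one vertex of $T$. A $T$-feedback arc set is a set $S\subseteq A(D)$ such that $D-S$ (same vertex set, arcs $A(D)\setminus S$) contains no $T$-cycle. For an order $\sigma=(v_1,\dots,v_n)$ of $V(D)$, an arc $v_iv_j$ is forward if $i<j$ and backward if $i>j$. The span of a backward arc $v_rv_l$ ($r>l$) is the interval $[v_l,v_r]=\{v_i: l\le i\le r\}$, and the arc is said to be above every vertex of its span. A backward arc above at least one terminal is called affected, and $\mathrm{cost}(\sigma)$ is the number of affected arcs with respect to $\sigma$. *)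

From mathcomp Require Import all_boot.
Set Implicit Arguments. Unset Strict Implicit. Unset Printing Implicit Defensive.

Section Tournaments.
Variables (V : finType) (E : rel V).

Definition tournament : Prop :=
  (forall u, ~~ E u u) /\
  (forall u v, u != v -> (E u v (+) E v u)).

Definition arcs : {set V * V} := [set a | E a.1 a.2].

Definition directed_cycle (R : rel V) (c : seq V) : bool :=
  [&& c != [::], uniq c & cycle R c].

Definition del_arcs (S : {set V * V}) : rel V :=
  fun u v => E u v && ((u, v) \notin S).

Definition T_cycle (T : {set V}) (R : rel V) (c : seq V) : Prop :=
  directed_cycle R c /\ has (fun x => x \in T) c.

Definition T_feedback_arc_set (T : {set V}) (S : {set V * V}) : Prop :=
  S \subset arcs /\ forall c, ~ T_cycle T (del_arcs S) c.

(* an order of V: a duplicate-free enumeration of all vertices;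
   position of x is index x s *)
Definition is_order (s : seq V) : bool := perm_eq s (enum V).

Definition backward (s : seq V) (a : V * V) : bool :=
  index a.2 s < index a.1 s.

Definition in_span (s : seq V) (a : V * V) (x : V) : bool :=
  (index a.2 s <= index x s) && (index x s <= index a.1 s).

Definition affected (T : {set V}) (s : seq V) (a : V * V) : bool :=
  backward s a && [exists t in T, in_span s a t].

Definition cost (T : {set V}) (s : seq V) : nat :=
  #|[set a in arcs | affected T s a]|.

End Tournaments.

From mathcomp Require Import all_boot.
From mathcomp Require Import zify.

Set Implicit Arguments.
Unset Strict Implicit.
Unset Printing Implicit Defensive.

(* Given an order, deleting its affected arcs leaves only arcs that, once they
   start at or after a terminal t, end strictly after t; so no cycle can return
   to t.  Conversely, given a feedback arc set S, order the vertices by a key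
   that is monotone along the arcs of D - S and separates strong components of
   D - S.  An affected arc (u, v) outside S would then force u, v and a
   terminal t between them into one strong component, hence a T-cycle. *)

Section StrongComponents.
Variables (V : finType) (R : rel V).

Lemma strongly_connected_cycle t x :
  t != x -> connect R t x -> connect R x t -> exists2 c, directed_cycle R c & t \in c.
Proof.
move=> ntx /connectP [[|y p] /= pth ex] cxt; first by rewrite ex eqxx in ntx.
case/andP: pth => Rty pth.
have /connectP [q qp] : connect R y t.
  by apply: connect_trans cxt; apply/connectP; exists p.
case: (shortenP qp) => q' q'p uq _ q't.
exists (y :: q'); last by rewrite q't mem_last.
by rewrite /directed_cycle uq /= rcons_path q'p -q't Rty.
Qed.

(* The number of ancestors of x is monotone along arcs and strictly increases
   when leaving a strong component; the rank of the strong component of x in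
   [{set V}] (less than [N]) breaks the remaining ties. *)
Lemma exists_component_key :
  exists K : V -> nat,
    (forall u v, R u v -> K u <= K v) /\ (forall x y, K x = K y -> connect R x y).
Proof.
pose anc x := [set y | connect R y x].
pose scc x := [set y | connect R x y && connect R y x].
pose N := #|{set V}|.
pose r x : nat := enum_rank (scc x).
have rN x : r x < N by exact: ltn_ord.
have scc_eq x y : connect R x y -> connect R y x -> scc x = scc y.
  move=> cxy cyx; apply/setP => z; rewrite !inE.
  apply/andP/andP => -[h1 h2]; split.
  - exact: connect_trans cyx h1.
  - exact: connect_trans h2 cxy.
  - exact: connect_trans cxy h1.
  - exact: connect_trans h2 cyx.
exists (fun x => #|anc x| * N + r x); split.
- move=> u v Ruv.
  have sub : anc u \subset anc v.
    by apply/subsetP => y; rewrite !inE => /connect_trans; apply; apply: connect1.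
  have [lt_uv|ge_uv] := ltnP #|anc u| #|anc v|; first by have := rN u; nia.
  have eq_anc : anc u = anc v by apply/eqP; rewrite eqEcard sub ge_uv.
  have : v \in anc u by rewrite eq_anc inE connect0.
  rewrite inE => cvu.
  by rewrite /r eq_anc (scc_eq u v (connect1 Ruv) cvu).
- move=> x y /(congr1 (modn^~ N)); rewrite /= !modnMDl !modn_small // => e.
  have /enum_rank_inj eq_scc : enum_rank (scc x) = enum_rank (scc y) by apply: val_inj.
  have : y \in scc x by rewrite eq_scc inE connect0.
  by rewrite inE => /andP [].
Qed.

Lemma path_last_gt (f : V -> nat) b :
  (forall u v, R u v -> b <= f u -> b < f v) ->
  forall l x, b <= f x -> path R x l -> l != [::] -> b < f (last x l).
Proof.
move=> step; elim=> [|y l IH] x //= bx /andP [Rxy pl] _.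
have lt_b_fy := step _ _ Rxy bx.
by case: l IH pl => [|z l] IH pl //=; apply: IH (ltnW lt_b_fy) pl _.
Qed.

End StrongComponents.

Lemma exists_order_by_key (V : finType) (K : V -> nat) :
  exists2 s, is_order s & forall x y, index x s <= index y s -> K x <= K y.
Proof.
pose leK x y := K x <= K y.
pose s := sort leK (enum V).
have sorted_s : sorted leK s by apply: sort_sorted => x y; exact: leq_total.
have mem_s x : x \in s by rewrite mem_sort mem_enum.
exists s => [|x y le_xy]; first by rewrite /is_order perm_sort.
have := sorted_leq_nth (fun a b c => @leq_trans (K a) (K b) (K c))
  (fun z => leqnn (K z)) x sorted_s (index x s) (index y s).
by rewrite !nth_index //; apply; rewrite ?inE ?index_mem.
Qed.

Section IrreflexiveDigraph.
Variables (V : finType) (E : rel V) (T : {set V}).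
Hypothesis E_irr : irreflexive E.

Lemma arc_neq u v : E u v -> u != v.
Proof. by apply: contraTneq => ->; rewrite E_irr. Qed.

Lemma affected_arcs_feedback s :
  is_order s -> T_feedback_arc_set E T [set a in arcs E | affected T s a].
Proof.
move=> so; set S := [set a in _ | _]; split.
  by apply/subsetP => a; rewrite inE => /andP [].
have memS x : x \in s by rewrite (perm_mem so) mem_enum.
move=> c [/andP [_ /andP [_ cyc]] /hasP [t tc tT]].
have step u v : del_arcs E S u v -> index t s <= index u s -> index t s < index v s.
  move=> /andP [Euv nS] tu.
  case: (ltngtP (index u s) (index v s)) => [uv|vu|].
  - exact: leq_ltn_trans tu uv.
  - rewrite inE /arcs inE /= Euv /affected /backward /= vu /= in nS.
    have : ~~ in_span s (u, v) t.
      by apply: contra nS => spt; apply/existsP; exists t; rewrite tT.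
    by rewrite /in_span /= tu andbT -ltnNge.
  - by move=> uv; have := arc_neq Euv; rewrite (index_inj u (memS u) (memS v) uv) eqxx.
case: (rot_to tc) => i c' ec.
have /= pth : cycle (del_arcs E S) (t :: c') by rewrite -ec rot_cycle.
have nonempty : rcons c' t != [::] by rewrite -size_eq0 size_rcons.
by have := path_last_gt step (leqnn _) pth nonempty; rewrite last_rcons ltnn.
Qed.

Lemma feedback_order_cost S :
  T_feedback_arc_set E T S -> exists2 s, is_order s & cost E T s <= #|S|.
Proof.
move=> [_ nocyc].
pose R := del_arcs E S.
have [K [K_mono K_inj]] := exists_component_key R.
have [s so Kidx] := exists_order_by_key K.
exists s => //; apply: subset_leq_card; apply/subsetP => -[u v].
rewrite inE /arcs inE /= => /andP [Euv /andP [bw /existsP [t /andP [tT sp]]]].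
apply: contraT => nS.
have Ruv : R u v by rewrite /R /del_arcs Euv nS.
move: bw sp; rewrite /backward /in_span /= => /ltnW vu /andP [vt tu].
have := K_mono _ _ Ruv; have := Kidx _ _ vt; have := Kidx _ _ tu => Ktu Kvt Kuv.
have no_strong_partner x : t != x -> K t = K x -> False.
  move=> ntx Ktx; have [c cyc tc] := strongly_connected_cycle ntx
    (K_inj _ _ Ktx) (K_inj _ _ (esym Ktx)).
  by apply: (nocyc c); split => //; apply/hasP; exists t.
have [etu|ntu] := eqVneq t u; last by exfalso; apply: (no_strong_partner u ntu); lia.
by subst t; exfalso; apply: (no_strong_partner v (arc_neq Euv)); lia.
Qed.

End IrreflexiveDigraph.

Theorem proposition1 (V : finType) (E : rel V) (T : {set V}) (k : nat) :
  tournament E ->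
  (exists S : {set V * V}, T_feedback_arc_set E T S /\ #|S| <= k) <->
  (exists s : seq V, is_order s /\ cost E T s <= k).
Proof.
move=> [noloop _]; have E_irr : irreflexive E by move=> u; exact: negbTE.
split.
- move=> [S [fas Sk]]; have [s so cost_s] := feedback_order_cost E_irr fas.
  by exists s; split; last exact: leq_trans Sk.
- move=> [s [so ck]]; exists [set a in arcs E | affected T s a].
  by split; [exact: affected_arcs_feedback | exact: ck].
Qed.
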